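(* Let $H\ge 1$, $S\ge1$, let $D=[d_{\theta s}]\in\mathbb{R}^{H\times S}$, let $x_k=[x_{1k},\ldots,x_{Sk}]^\top\in\mathbb{R}^S$ have strictly positive entries summing to $1$, and let $\theta^\star_k\in\{1,\ldots,H\}$ be the unique minimizer of $\theta\mapsto\sum_{s=1}^S d_{\theta s}x_{sk}$. Define $B_k=(\mathbb{1}_He_{\theta^\star_k}^\top-I_H)D$, $C_k=\begin{bmatrix}B_k\\ \mathbb{1}_S^\top\end{bmatrix}\in\mathbb{R}^{(H+1)\times S}$, $y_k=B_kx_k\in\mathbb{R}^H$ (so $y_k(\theta)=\sum_{s}(d_{\theta^\star_k s}-d_{\theta s})x_{sk}$) and $\tilde y_k=\begin{bmatrix}y_k\\1\end{bmatrix}$. Then the constrained system ''find $\tilde x_k\in\mathbb{R}^S$ with $\tilde y_k=C_k\tilde x_k$ and all entries of $\tilde x_k$ strictly positive'' admits a unique solution if and only if $\mathrm{rank}(C_k)=S$. Consequently, a necessary condition for this system to have a unique solution is $H\ge S$.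
   Context: Interpretation: in a weakly-connected network with $S$ sending sub-networks that are internally homogeneous (all agents in sending sub-network $s$ have the same true distribution $f^{(s)}$ and the same likelihoods $L^{(s)}(\theta)$, $\theta\in\{1,\ldots,H\}$), $d_{\theta s}=D[f^{(s)}\|L^{(s)}(\theta)]$ is the KL divergence, $x_{sk}$ is the aggregate limiting weight from sending sub-network $s$ to receiving agent $k$, and $y_k$ is the vector of limiting normalized log-beliefs at agent $k$; recovering $x_k$ from $y_k$ (with $D$ known) is the topology learning problem. $e_m$ denotes the $m$-th canonical basis vector of $\mathbb{R}^H$, $\mathbb{1}_L$ the all-ones vector of length $L$. *)

From mathcomp Require Import all_boot all_order all_algebra.
Set Implicit Arguments. Unset Strict Implicit. Unset Printing Implicit Defensive.
Import Order.TTheory GRing.Theory Num.Theory.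
Local Open Scope ring_scope.

Definition Bmat (R : ringType) (H S : nat) (D : 'M[R]_(H, S)) (ts : 'I_H)
  : 'M[R]_(H, S) :=
  ((const_mx 1 : 'cV[R]_H) *m (delta_mx 0 ts : 'rV[R]_H) - 1%:M) *m D.

Definition Cmat (R : ringType) (H S : nat) (D : 'M[R]_(H, S)) (ts : 'I_H)
  : 'M[R]_(H + 1, S) :=
  col_mx (Bmat D ts) (const_mx 1 : 'rV[R]_S).

Definition yvec (R : ringType) (H S : nat) (D : 'M[R]_(H, S)) (ts : 'I_H)
  (x : 'cV[R]_S) : 'cV[R]_H := Bmat D ts *m x.

Definition ytvec (R : ringType) (H S : nat) (D : 'M[R]_(H, S)) (ts : 'I_H)
  (x : 'cV[R]_S) : 'cV[R]_(H + 1) :=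
  col_mx (yvec D ts x) (const_mx 1 : 'cV[R]_1).

From mathcomp Require Import all_boot all_order all_algebra.
Import Order.TTheory GRing.Theory Num.Theory.
From mathcomp Require Import zify lra.
Local Open Scope ring_scope.

(* Since the entries of x sum to 1, ytilde_k = C_k x, so x itself is a positive
   solution.  It is the only one exactly when ker C_k = 0: any kernel vector v
   gives the further positive solutions x + e v for small e > 0.  Hence
   uniqueness is equivalent to C_k having full column rank S.  Row theta* of
   B_k vanishes, so rank C_k <= H and uniqueness forces S <= H. *)

Lemma mulmx_inj_full_col_rank (F : fieldType) m n p (C : 'M[F]_(m, n)) :
  \rank C = n -> injective (@mulmx F m n p C).
Proof.
move=> rkC; have /row_fullP [B BC1] : row_full C by rewrite /row_full rkC.
by move=> u v Cuv; rewrite -(mul1mx u) -(mul1mx v) -BC1 -!mulmxA Cuv.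
Qed.

Lemma mxrank_ltn_col_ker (F : fieldType) m n (C : 'M[F]_(m, n)) :
  (\rank C < n)%N -> exists2 v : 'cV[F]_n, v != 0 & C *m v = 0.
Proof.
move=> rkC; have : kermx C^T != 0.
  by rewrite -mxrank_eq0 mxrank_ker mxrank_tr subn_eq0 -ltnNge.
case/rowV0Pn=> v; rewrite sub_kermx => /eqP vCt v_neq0.
by exists v^T; rewrite ?trmx_eq0 // -[C]trmxK -trmx_mul vCt trmx0.
Qed.

Lemma exists_pos_perturbation {R : realFieldType} {n : nat} {x : 'cV[R]_n} (v : 'cV[R]_n) :
  (forall s, 0 < x s 0) -> exists2 e : R, 0 < e & forall s, 0 < (x + e *: v) s 0.
Proof.
move=> xpos; pose mu := \sum_s `|v s 0| / x s 0 + 1.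
have term_ge0 s : 0 <= `|v s 0| / x s 0 by rewrite divr_ge0 // ltW.
have mu_gt s : `|v s 0| / x s 0 < mu.
  rewrite /mu (bigD1 s) //=.
  have : 0 <= \sum_(i | i != s) `|v i 0| / x i 0.
    by apply: sumr_ge0 => i _; apply: term_ge0.
  lra.
have mu_gt0 : 0 < mu.
  have : 0 <= \sum_s `|v s 0| / x s 0 by apply: sumr_ge0 => i _; apply: term_ge0.
  rewrite /mu; lra.
exists mu^-1; first by rewrite invr_gt0.
move=> s; rewrite !mxE -(pmulr_rgt0 _ mu_gt0) mulrDr mulrA mulfV ?gt_eqF // mul1r.
have := mu_gt s; rewrite ltr_pdivrMr // => vx_lt.
have : - v s 0 <= `|v s 0| by rewrite -normrN ler_norm.
lra.
Qed.

Lemma unique_pos_solution_iff {R : realFieldType} {m n : nat} (C : 'M[R]_(m, n))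
    {x : 'cV[R]_n} :
  (forall s, 0 < x s 0) ->
  (exists! xt : 'cV[R]_n, C *m x = C *m xt /\ forall s, 0 < xt s 0)
    <-> \rank C = n.
Proof.
move=> xpos; split.
- move=> [xt0 [_ uniq_sol]]; apply/eqP; rewrite eqn_leq rank_leq_col leqNgt.
  apply/negP => /mxrank_ltn_col_ker [v v_neq0 Cv0].
  have [e e_gt0 xev_pos] := exists_pos_perturbation v xpos.
  have sol_xev : C *m x = C *m (x + e *: v).
    by rewrite mulmxDr -scalemxAr Cv0 scaler0 addr0.
  have : e *: v = 0.
    apply: (@addrI _ x); rewrite addr0.
    by rewrite -(uniq_sol _ (conj sol_xev xev_pos)) (uniq_sol x (conj erefl xpos)).
  by move/eqP; rewrite scaler_eq0 gt_eqF //= (negbTE v_neq0).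
- move=> rkC; exists x; split=> [// | xt [Cx_xt _]].
  exact: mulmx_inj_full_col_rank Cx_xt.
Qed.

Lemma mxrank_zero_row (F : fieldType) m n (A : 'M[F]_(m, n)) (i : 'I_m) :
  row i A = 0 -> (\rank A <= m.-1)%N.
Proof.
move=> Ai0; have : ((delta_mx 0 i : 'rV[F]_m) <= kermx A)%MS.
  by rewrite sub_kermx -rowE Ai0.
move/mxrankS; rewrite mxrank_ker mxrank_delta.
by have := rank_leq_row A; lia.
Qed.

Lemma row_Bmat_eq0 (R : ringType) H S (D : 'M[R]_(H, S)) (ts : 'I_H) :
  row ts (Bmat D ts) = 0.
Proof.
rewrite /Bmat row_mul linearB /= row_mul row_const row1.
by rewrite [const_mx 1]mx11_scalar mxE mul1mx subrr mul0mx.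
Qed.

Lemma mxrank_Cmat_le (F : fieldType) H S (D : 'M[F]_(H, S)) (ts : 'I_H) :
  (\rank (Cmat D ts) <= H)%N.
Proof.
have := @mxrank_zero_row F (H + 1) S (Cmat D ts) (lshift 1 ts).
rewrite rowKu row_Bmat_eq0 => /(_ erefl) rkC.
by apply: leq_trans rkC _; rewrite addn1.
Qed.

Lemma ytvecE (R : ringType) H S (D : 'M[R]_(H, S)) (ts : 'I_H) (x : 'cV[R]_S) :
  \sum_s x s 0 = 1 -> ytvec D ts x = Cmat D ts *m x.
Proof.
move=> xsum; rewrite /ytvec /Cmat mul_col_mx; congr col_mx.
apply/matrixP => i j; rewrite !mxE (ord1 j).
by under eq_bigr => s _ do rewrite mxE mul1r.
Qed.

Theorem lemma1 (R : realFieldType) (H S : nat) (hH : (1 <= H)%N) (hS : (1 <= S)%N)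
  (D : 'M[R]_(H, S)) (x : 'cV[R]_S) (ts : 'I_H)
  (xpos : forall s, 0 < x s 0) (xsum : \sum_(s < S) x s 0 = 1)
  (ts_min : forall th, (D *m x) ts 0 <= (D *m x) th 0)
  (ts_uniq : forall th, (forall th', (D *m x) th 0 <= (D *m x) th' 0) -> th = ts) :
  ((exists! xt : 'cV[R]_S, ytvec D ts x = Cmat D ts *m xt /\ forall s, 0 < xt s 0)
     <-> \rank (Cmat D ts) = S)
  /\ ((exists! xt : 'cV[R]_S, ytvec D ts x = Cmat D ts *m xt /\ forall s, 0 < xt s 0)
       -> (S <= H)%N).
Proof.
have unique_iff := unique_pos_solution_iff (Cmat D ts) xpos.
rewrite ytvecE //; split=> [// | /unique_iff <-].
exact: mxrank_Cmat_le.
Qed.
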